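(* For every $m\ge1$, $\dim\mathcal{H}_{(m)}\ge\frac{(m-1)!}{m}$, and $\dim\mathcal{H}_{(m)}\sim\frac{(m-1)!}{m}$ as $m\to\infty$.
   Context: $\mathcal{H}_{(m)}$ is the quotient of the span in $\mathbb{C}[\mathbb{S}_m]$ of all $m$-cycles by the span of those generalized Vassiliev elements all of whose terms are $m$-cycles, where for $m\ge2$, $\gamma\in\mathbb{S}_{m-1}$, $q\in[m-1]\cup\{*\}$, $t\in\{0,\dots,m-1\}$, $\alpha_t\in\mathbb{S}_m$ is obtained by inserting a new point $x$ into the line $1<\dots<m-1$ in the gap between $t$ and $t+1$, relabeling in order, acting as $\gamma$ on old points except $q\mapsto x\mapsto\gamma(q)$ if $q\ne*$, $x$ fixed if $q=*$, and for a cycle $v$ of $\gamma$, $E(\gamma,q,v)=\sum_{j\in v}(\alpha_{j-1}-\alpha_j)$. *)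

From HB Require Import structures.
From mathcomp Require Import all_boot all_order all_algebra all_fingroup all_field.
Set Implicit Arguments. Unset Strict Implicit. Unset Printing Implicit Defensive.
Import Order.TTheory GRing.Theory Num.Theory.
Local Open Scope ring_scope.

(* Conventions: the point set [m] = {1,...,m} is modelled by 'I_m = {0,...,m-1}
   (point k+1 <-> ordinal k).  We write m = n.+1, so gamma ranges over 'S_n
   (= S_{m-1}) and the gap index t over 'I_n.+1 = {0,...,m-1}.
   The group algebra C[S_m] is modelled by finite functions 'S_m -> algC
   (algC = algebraic complex numbers). *)

Definition GA (m : nat) := {ffun 'S_m -> algC^o}.

Definition pvec m (s : 'S_m) : GA m := [ffun u => (u == s)%:R].

Definition mcycle m (s : 'S_m) : bool := [exists x, #|porbit s x| == m].

(* alpha_t(gamma, q): insert a new point x in gap t (new label t+1, i.e.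
   ordinal t), relabel in order (old 0-indexed point i goes to lift t i);
   q = None encodes q = *, in which case x is fixed; otherwise
   q |-> x |-> gamma(q).  Permutations compose left-to-right: (s * u) y = u (s y). *)
Definition alpha n (g : 'S_n) (q : option 'I_n) (t : 'I_n.+1) : 'S_n.+1 :=
  match q with
  | None => lift_perm t t g
  | Some q' => tperm t (lift t q') * lift_perm t t g
  end.

(* generalized Vassiliev element E(gamma, q, v) = sum_{j in v} (alpha_{j-1} - alpha_j)
   (1-indexed j; with 0-indexed j' = j-1 the gaps are j' and j'+1) *)
Definition Evass n (g : 'S_n) (q : option 'I_n) (v : {set 'I_n}) : GA n.+1 :=
  \sum_(j in v) (pvec (alpha g q (inord j)) - pvec (alpha g q (inord j.+1))).

Definition all_terms_mcycles m (e : GA m) : bool :=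
  [forall s : 'S_m, (e s != 0) ==> mcycle s].

Definition cycle_span m : {vspace GA m} :=
  <<[seq pvec s | s <- enum 'S_m & mcycle s]>>%VS.

Definition vass_elems n : seq (GA n.+1) :=
  flatten [seq flatten [seq [seq Evass g q v | v <- enum (porbits g)]
                        | q <- enum {: option 'I_n}]
          | g <- enum {: 'S_n}].

Definition vass_span n : {vspace GA n.+1} :=
  <<[seq e <- vass_elems n | all_terms_mcycles e]>>%VS.

(* dim H_(m) = dim(cycle_span) - dim(vass_span) (vass_span is a subspace of
   cycle_span); only meaningful for m >= 1. *)
Definition dimH (m : nat) : nat :=
  match m with
  | 0 => 0
  | n.+1 => (\dim (cycle_span n.+1) - \dim (vass_span n))%N
  end.

From HB Require Import structures.
From mathcomp Require Import all_boot all_order all_algebra all_fingroup all_field.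
From mathcomp Require Import zify ring lra.
Import Order.TTheory GRing.Theory Num.Theory.
Set Implicit Arguments. Unset Strict Implicit. Unset Printing Implicit Defensive.

(* Every generalized Vassiliev element all of whose terms are m-cycles is, up to
   sign, of the form s - s^rho^-1 with s an m-cycle and rho : i |-> i + 1 mod m:
   the only gaps of the telescoping sum that survive are the first and the last,
   and inserting the new point in the last gap is inserting it in the first gap
   followed by a relabelling by rho.  Hence dim H_(m) is the number of orbits of
   <rho> acting by conjugation on the (m-1)! m-cycles.  Orbits have at most m
   elements, whence the lower bound.  A shorter orbit consists of cycles that
   commute with some rho^k, 0 < k <= m/2; such a permutation is determined by its
   first k values, so there are at most (m/2 + 1) m^(m/2) of them, which is
   negligible against (m-1)!. *)


Local Open Scope group_scope.

Section PermOrbits.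
Variable T : finType.
Implicit Types (s t : {perm T}) (A : {set T}).

Lemma porbit_subset s A x :
  x \in A -> {in A, forall y, s y \in A} -> porbit s x \subset A.
Proof.
move=> xA sA; apply/subsetP => _ /porbitP [i ->].
by rewrite permX; elim: i => //= i IH; apply: sA.
Qed.

Lemma porbitJ s t x : porbit (s ^ t) (t x) = t @: porbit s x.
Proof.
apply/setP => y; apply/porbitP/imsetP => [[i ->] | [z /porbitP [i ->] ->]].
  by exists ((s ^+ i) x); [exact: mem_porbit | rewrite -conjXg permJ].
by exists i; rewrite -conjXg permJ.
Qed.

End PermOrbits.

Section MCycles.
Variable m : nat.
Implicit Types (s t : 'S_m) (A : {set 'I_m}).

Lemma mcycle_porbitT s : mcycle s -> forall x, porbit s x = setT.
Proof.
case/existsP => x /eqP cx y.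
have sxT : porbit s x = setT.
  by apply/eqP; rewrite eqEcard subsetT cardsT card_ord cx leqnn.
by apply/eqP; rewrite -sxT eq_porbit_mem sxT inE.
Qed.

Lemma mcycleJ s t : mcycle s -> mcycle (s ^ t).
Proof.
case/existsP => x sx; apply/existsP; exists (t x).
by rewrite porbitJ card_imset //; exact: perm_inj.
Qed.

Lemma mcycle_porbit_le s A x :
  mcycle s -> porbit s x \subset A -> m <= #|A|.
Proof.
by move=> sm /subset_leq_card; rewrite (mcycle_porbitT sm) cardsT card_ord.
Qed.

Lemma mcycle_fix s x : mcycle s -> s x = x -> m = 1%N.
Proof.
move=> sm sx; apply/eqP; rewrite eqn_leq.
have /mcycle_porbit_le : porbit s x \subset [set x].
  by apply: porbit_subset; rewrite ?set11 // => y /set1P ->; rewrite sx set11.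
by rewrite cards1 => /(_ sm) ->; case: m x {sx} => [[]|].
Qed.

End MCycles.

Section Rotation.
Variable n : nat.
Local Notation m := n.+1.
Implicit Types s t : 'S_m.

Definition ordS_perm : 'S_m := perm (@ordS_inj m).

Lemma ordS_permX k (i : 'I_m) : val ((ordS_perm ^+ k) i) = (i + k) %% m.
Proof.
elim: k => [|k IH]; first by rewrite expg0 perm1 addn0 modn_small.
by rewrite expgSr permM permE /= IH -addn1 modnDml -addnA addn1.
Qed.

Lemma ordS_permXm : ordS_perm ^+ m = 1.
Proof. by apply/permP => i; apply: val_inj; rewrite ordS_permX perm1 modnDr modn_small. Qed.

Lemma mcycle_ordS_perm : mcycle ordS_perm.
Proof.
apply/existsP; exists ord0.
suff -> : porbit ordS_perm ord0 = setT by rewrite cardsT card_ord.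
apply/setP => i; rewrite inE; apply/porbitP; exists i.
by apply: val_inj; rewrite ordS_permX add0n modn_small.
Qed.

Lemma cent1_ordS_permX_inj k s t :
  0 < k -> s \in 'C[ordS_perm ^+ k] -> t \in 'C[ordS_perm ^+ k] ->
  {in [pred i : 'I_m | i < k], s =1 t} -> s = t.
Proof.
move=> k_gt0 /cent1P cs /cent1P ct eq_st.
suff eq_lt N (i : 'I_m) : i < N -> s i = t i by apply/permP => i; apply: (eq_lt m).
elim: N i => // N IH i; rewrite ltnS leq_eqVlt => /predU1P [iN|]; last exact: IH.
have [ik|ki] := ltnP i k; first exact: eq_st.
have jm : i - k < m by rewrite (leq_ltn_trans (leq_subr _ _)).
have <- : (ordS_perm ^+ k) (Ordinal jm) = i.
  by apply: val_inj; rewrite ordS_permX subnK // modn_small.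
by rewrite -!permM -cs -ct !permM IH //=; lia.
Qed.

Lemma card_cent1_ordS_perm : #|'C[ordS_perm]| = m.
Proof.
apply/eqP; rewrite eqn_leq; apply/andP; split.
  have inj0 : {in 'C[ordS_perm] &, injective (fun s : 'S_m => s ord0)}.
    move=> s t cs ct st0; apply: (@cent1_ordS_permX_inj 1); rewrite ?expg1 //.
    by move=> i; rewrite inE ltnS leqn0 => /eqP i0; rewrite (_ : i = ord0) //; apply: val_inj.
  by rewrite -(card_in_imset inj0); apply: leq_trans (max_card _) _; rewrite card_ord.
have injX : injective (fun i : 'I_m => ordS_perm ^+ i).
  move=> i j /(congr1 (fun s : 'S_m => val (s ord0))).
  by rewrite !ordS_permX !add0n !modn_small // => /val_inj.
rewrite -[m in (m <= _)%N]card_ord -(card_imset _ injX); apply: subset_leq_card.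
by apply/subsetP => _ /imsetP [i _ ->]; apply/cent1P/commute_sym/commuteX.
Qed.

Lemma mcycle_classE : [set s : 'S_m | mcycle s] = ordS_perm ^: [set: 'S_m].
Proof.
apply/setP => s; rewrite inE; apply/idP/imsetP => [sm | [t _ ->]]; last first.
  exact: mcycleJ mcycle_ordS_perm.
pose x : 'I_m := ord0.
have ox : #|porbit s x| = m by rewrite (mcycle_porbitT sm) cardsT card_ord.
have uniq_orbit := uniq_traject_porbit s x; rewrite ox in uniq_orbit.
have inj_iter : injective (fun i : 'I_m => iter i s x).
  move=> i j; rewrite -!(nth_traject s (ltn_ord _) x) => /eqP.
  by rewrite nth_uniq ?size_traject // => /eqP /val_inj.
exists (perm inj_iter) => //; apply/permP => y.
rewrite -(permKV (perm inj_iter) y); set i := (perm inj_iter)^-1 y.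
rewrite permJ !permE /=.
have [im | ] := ltnP i.+1 m; first by rewrite modn_small.
rewrite leq_eqVlt ltnNge (ltn_ord i) orbF => /eqP im.
rewrite -im modnn /=; transitivity (iter i.+1 s x) => //.
by rewrite -im; have := iter_porbit s x; rewrite ox.
Qed.

Lemma card_mcycles : #|[set s : 'S_m | mcycle s]| = n`!.
Proof.
rewrite mcycle_classE -(index_cent1 [set: 'S_m]%G) indexgI.
have := LagrangeI [set: 'S_m] 'C[ordS_perm].
rewrite setTI card_cent1_ordS_perm cardsT card_Sn factS.
by move/eqP; rewrite eqn_mul2l /= => /eqP.
Qed.

Definition rotJ s := s ^ ordS_perm^-1.

Lemma iter_rotJ k s : iter k rotJ s = s ^ (ordS_perm^-1 ^+ k).
Proof. by elim: k => [|k IH]; rewrite ?conjg1 //= IH /rotJ -conjgM -expgSr. Qed.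

Lemma rotJ_period s : iter m rotJ s = s.
Proof. by rewrite iter_rotJ expVgn ordS_permXm invg1 conjg1. Qed.

Lemma mcycle_rotJ s : mcycle s -> mcycle (rotJ s).
Proof. exact: mcycleJ. Qed.

Lemma rotJ_inj : injective rotJ.
Proof. exact: conjg_inj. Qed.

End Rotation.

Lemma lift_perm_onto n (i j : 'I_n.+1) (s : 'S_n.+1) :
  s i = j -> exists g : 'S_n, lift_perm i j g = s.
Proof.
move=> sij; pose g_fun k := odflt k (unlift j (s (lift i k))).
have g_funE k : lift j (g_fun k) = s (lift i k).
  rewrite /g_fun; case: unliftP => [k' -> // | /esym eq_j].
  by move/perm_inj/eqP: (etrans sij eq_j); rewrite (negbTE (neq_lift i k)).
have g_inj : injective g_fun.
  by move=> k k' /(congr1 (lift j)); rewrite !g_funE => /perm_inj /lift_inj.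
exists (perm g_inj); apply/permP => y; case: (unliftP i y) => [k|] ->.
  by rewrite lift_perm_lift permE g_funE.
by rewrite lift_perm_id sij.
Qed.

Section Insertion.
Variable n : nat.
Local Notation m := n.+1.
Implicit Types (g : 'S_n) (q : 'I_n) (t : 'I_m).

Lemma alpha_gap g q t : alpha g (Some q) t t = lift t (g q).
Proof. by rewrite /alpha permM tpermL lift_perm_lift. Qed.

Lemma alpha_lift_src g q t : alpha g (Some q) t (lift t q) = t.
Proof. by rewrite /alpha permM tpermR lift_perm_id. Qed.

Lemma alpha_lift g q t k : k != q -> alpha g (Some q) t (lift t k) = lift t (g k).
Proof.
move=> kq; rewrite /alpha permM tpermD ?lift_perm_lift ?neq_lift //.
by rewrite (inj_eq (@lift_inj _ t)) eq_sym.
Qed.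

Lemma mcycle_alpha_porbit g q t : mcycle (alpha g (Some q) t) -> porbit g q = setT.
Proof.
move=> am; apply/setP => y; rewrite inE; apply: contraT => yq.
have qy : q \notin porbit g y by rewrite porbit_sym.
suff /(mcycle_porbit_le am) :
    porbit (alpha g (Some q) t) (lift t y) \subset lift t @: porbit g y.
  move/leq_trans/(_ (leq_trans (leq_imset_card _ _) (max_card _))).
  by rewrite card_ord ltnn.
apply: porbit_subset => [|_ /imsetP [z zy ->]]; first exact/imset_f/porbit_id.
rewrite alpha_lift; last by apply: contraNneq qy => <-.
apply: imset_f; have /eqP <- : porbit g z == porbit g y by rewrite eq_porbit_mem.
by have := mem_porbit g 1 z; rewrite expg1.
Qed.

Lemma mcycle_alpha_fixed g t : mcycle (alpha g None t) -> n = 0%N.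
Proof. by move/mcycle_fix => /(_ t (lift_perm_id _ _ _)) []. Qed.

Lemma alpha_ord_max g q : alpha g (Some q) ord_max = rotJ (alpha g (Some q) ord0).
Proof.
have rotV0 : (ordS_perm n)^-1 ord0 = ord_max.
  apply: (@perm_inj _ (ordS_perm n)); rewrite permKV permE.
  by apply: val_inj; rewrite /= modnn.
have rotV_lift k : (ordS_perm n)^-1 (lift ord0 k) = lift ord_max k.
  apply: (@perm_inj _ (ordS_perm n)); rewrite permKV permE; apply: val_inj.
  by rewrite /= /bump leq0n leqNgt ltn_ord /= add0n add1n modn_small // ltnS.
apply/permP => y; rewrite -[y](permK (ordS_perm n)) /rotJ permJ.
case: (unliftP ord0 (ordS_perm n y)) => [k|] ->.
  rewrite rotV_lift; have [->|kq] := eqVneq k q; first by rewrite !alpha_lift_src.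
  by rewrite !alpha_lift // rotV_lift.
by rewrite rotV0 !alpha_gap rotV_lift.
Qed.

Lemma mcycle_alpha_ord0 s : 0 < n -> mcycle s -> exists g q, alpha g (Some q) ord0 = s.
Proof.
move=> n_gt0 sm; have s0 : s ord0 != ord0.
  by apply: contraTneq n_gt0 => /(mcycle_fix sm) [->].
case: (unliftP ord0 (s^-1 ord0)) => [q sq | s0V]; last first.
  by move: s0; rewrite -{1}s0V permKV eqxx.
have [g gE] : exists g : 'S_n, lift_perm ord0 ord0 g = tperm ord0 (s^-1 ord0) * s.
  by apply: lift_perm_onto; rewrite permM tpermL permKV.
by exists g, q; rewrite /alpha gE -sq mulgA tperm2 mul1g.
Qed.

End Insertion.

Section VassilievSpan.
Variable n : nat.
Local Notation m := n.+1.
Implicit Types (g : 'S_n) (q : option 'I_n) (v : {set 'I_n}) (s u : 'S_m).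

Definition rot_diffs : seq (GA m) :=
  [seq (pvec s - pvec (rotJ s))%R | s <- enum 'S_m & mcycle s].

Lemma Evass_setT g q :
  Evass g q setT = (pvec (alpha g q ord0) - pvec (alpha g q ord_max))%R.
Proof.
pose F k := pvec (alpha g q (inord k)).
rewrite /Evass (eq_bigl xpredT) => [|j]; last by rewrite inE.
under eq_bigr do rewrite -opprB.
rewrite sumrN -(big_mkord xpredT (fun j => F j.+1 - F j)%R) telescope_sumr // opprB.
by congr (pvec (alpha g q _) - pvec (alpha g q _))%R; apply: val_inj; rewrite /= inordK.
Qed.

Lemma Evass_support g q v u : (Evass g q v u != 0)%R -> exists t, u = alpha g q t.
Proof.
move=> nz; have [t /eqP -> | no_t] := pickP (fun t => u == alpha g q t).
  by exists t.
case/eqP: nz; rewrite /Evass sum_ffunE big1 // => j _.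
by rewrite !ffunE [_ == _]no_t [_ == _]no_t subrr.
Qed.

Lemma Evass_in_vass_elems g q x : Evass g q (porbit g x) \in vass_elems n.
Proof.
apply/flatten_mapP; exists g; rewrite ?mem_enum //.
apply/flatten_mapP; exists q; rewrite ?mem_enum //.
by apply: map_f; rewrite mem_enum; apply: imset_f.
Qed.

Lemma rot_diff_in_vass s : mcycle s -> (pvec s - pvec (rotJ s))%R \in vass_span n.
Proof.
move=> sm; have [n0 | n_gt0] := posnP n.
  suff -> : rotJ s = s by rewrite subrr mem0v.
  by move: s {sm}; rewrite n0 => s; rewrite /rotJ !(permS1 s) conj1g.
have [g [q alpha_s]] := mcycle_alpha_ord0 n_gt0 sm.
have gqT : porbit g q = setT by apply: (@mcycle_alpha_porbit _ _ _ ord0); rewrite alpha_s.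
rewrite -alpha_s -alpha_ord_max -Evass_setT; apply: memv_span.
rewrite mem_filter; apply/andP; split; last by rewrite -gqT Evass_in_vass_elems.
rewrite Evass_setT alpha_ord_max alpha_s; apply/forallP => u; apply/implyP; rewrite !ffunE.
have [-> // | _] := eqVneq u s; have [-> _ | _] := eqVneq u (rotJ s).
  exact: mcycleJ.
by rewrite subrr eqxx.
Qed.

Lemma vass_in_rot_diffs e :
  e \in [seq e <- vass_elems n | all_terms_mcycles e] -> e \in <<rot_diffs>>%VS.
Proof.
rewrite mem_filter => /andP [/forallP e_mc /flatten_mapP [g _ /flatten_mapP [q _]]].
case/mapP=> _ /[!mem_enum] /imsetP [x _ ->] e_def; rewrite {e}e_def in e_mc *.
have [-> | nz] := eqVneq (Evass g q (porbit g x)) 0%R; first exact: mem0v.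
have /existsP [u nz_u] : [exists u, Evass g q (porbit g x) u != 0%R].
  apply: contraNT nz => /existsPn zero; apply/eqP/ffunP => u.
  by rewrite ffunE; exact/eqP/negPn/zero.
have [t u_alpha] := Evass_support nz_u; have := implyP (e_mc u) nz_u; rewrite u_alpha.
case: q e_mc nz {nz_u u_alpha} => [q | _ _ /mcycle_alpha_fixed n0]; last first.
  by have := ltn_ord x; rewrite {2}n0.
move=> + + /mcycle_alpha_porbit gqT.
have -> : porbit g x = setT by apply/eqP; rewrite -gqT eq_porbit_mem gqT inE.
rewrite Evass_setT alpha_ord_max; set a := alpha g (Some q) ord0 => e_mc nz.
have am : mcycle a.
  apply: implyP (e_mc a) _; rewrite !ffunE eqxx.
  have [aE | _] := eqVneq a (rotJ a); last by rewrite subr0 oner_eq0.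
  by rewrite -aE subrr eqxx in nz.
by apply/memv_span/map_f; rewrite mem_filter am mem_enum.
Qed.

Lemma vass_spanE : vass_span n = <<rot_diffs>>%VS.
Proof.
apply/eqP; rewrite eqEsubv; apply/andP; split; apply/span_subvP.
  exact: vass_in_rot_diffs.
by move=> _ /mapP [s /[!mem_filter] /andP [sm _] ->]; apply: rot_diff_in_vass.
Qed.

End VassilievSpan.

Section OrbitReps.
Variables (T : finType) (f : T -> T) (P : pred T).
Hypotheses (f_inj : injective f) (P_f : forall x, P x -> P (f x)).

Definition froot_reps : {set T} := [set r | P r & froots f r].

Let f_sym : connect_sym (frel f) := fconnect_sym f_inj.

Lemma closed_iter k x : P x -> P (iter k f x).
Proof. by move=> Px; elim: k => //= k /P_f. Qed.

Lemma closed_froot x : P x -> P (froot f x).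
Proof.
move=> Px; have := closed_iter (findex f x (froot f x)) Px.
by rewrite iter_findex ?connect_root.
Qed.

Lemma froot_f x : froot f (f x) = froot f x.
Proof. by symmetry; apply/(fingraph.rootP f_sym)/fconnect1. Qed.

Lemma order_le_period k x : 0 < k -> iter k f x = x -> fingraph.order f x <= k.
Proof.
move=> k_gt0 fkx; have /loopingP loop : looping f x k.
  by rewrite /looping fkx; case: k k_gt0 {fkx} => //= k _; rewrite inE eqxx.
rewrite -(size_traject f x k); apply: leq_trans (card_size _); apply: subset_leq_card.
by apply/subsetP => y /iter_findex <-; apply: loop.
Qed.

Lemma card_sum_order : #|[set x | P x]| = \sum_(r in froot_reps) fingraph.order f r.
Proof.
rewrite -sum1_card (partition_big (froot f) (fun r => r \in froot_reps)) => [|x]; last first.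
  by rewrite !inE => Px; rewrite closed_froot // (roots_root f_sym).
apply: eq_bigr => r; rewrite inE => /andP [Pr /eqP rr].
rewrite sum1_card /fingraph.order; apply: eq_card => x; rewrite !inE.
apply/andP/idP => [[_ /eqP <-] | rx].
  by rewrite f_sym connect_root.
split; first by have := closed_iter (findex f r x) Pr; rewrite iter_findex // inE.
by rewrite -(fingraph.rootP f_sym rx) rr.
Qed.

Lemma card_le_mul_reps m :
  0 < m -> (forall x, iter m f x = x) -> #|[set x | P x]| <= m * #|froot_reps|.
Proof.
move=> m_gt0 fm; rewrite card_sum_order mulnC -sum_nat_const.
by apply: leq_sum => r _; apply: order_le_period.
Qed.

Lemma mul_reps_le m :
  m * #|froot_reps| <=
    #|[set x | P x]| + m * #|[set r in froot_reps | fingraph.order f r < m]|.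
Proof.
rewrite card_sum_order mulnC -sum_nat_const.
apply: leq_trans
  (_ : \sum_(r in froot_reps) (fingraph.order f r + m * (fingraph.order f r < m)) <= _).
  by apply: leq_sum => r _; case: ltnP => h; rewrite ?muln1 ?leq_addl // muln0 addn0.
rewrite big_split leq_add2l -big_distrr leq_mul2l -sum1_card; apply/orP; right.
rewrite big_mkcond [X in _ <= X]big_mkcond; apply: leq_sum => r _.
by rewrite inE; case: (r \in froot_reps); case: ltnP.
Qed.

End OrbitReps.

Section OrbitQuotient.
Variables (K : fieldType) (T : finType) (f : T -> T) (P : pred T).
Hypotheses (f_inj : injective f) (P_f : forall x, P x -> P (f x)).
Local Open Scope ring_scope.

Definition unitv (s : T) : {ffun T -> K^o} := [ffun u => (u == s)%:R].

Local Notation froot_reps := (froot_reps f P).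
Local Notation D := [seq unitv s - unitv (f s) | s <- enum T & P s].
Local Notation R := [seq unitv r | r <- enum froot_reps].

Lemma unitv_sub_iter s k : P s -> unitv s - unitv (iter k f s) \in <<D>>%VS.
Proof.
move=> Ps; elim: k => [|k IH]; first by rewrite subrr mem0v.
rewrite -[unitv s](subrK (unitv (iter k f s))) -addrA; apply: memvD => //=.
by apply/memv_span/map_f; rewrite mem_filter mem_enum (closed_iter P_f).
Qed.

Lemma span_unitv_decomp : <<[seq unitv s | s <- enum T & P s]>>%VS = (<<D>> + <<R>>)%VS.
Proof.
apply/eqP; rewrite eqEsubv; apply/andP; split; last first.
  rewrite subv_add; apply/andP; split; apply/span_subvP => e /mapP [s].
    rewrite mem_filter mem_enum andbT => Ps ->.
    by apply: memvB; apply/memv_span/map_f; rewrite mem_filter mem_enum andbT //; apply: P_f.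
  rewrite mem_enum inE => /andP [Ps _] ->.
  by apply/memv_span/map_f; rewrite mem_filter mem_enum Ps.
apply/span_subvP => e /mapP [s /[!mem_filter] /andP [Ps _] ->].
rewrite -[unitv s](subrK (unitv (froot f s))); apply: memv_add.
  by rewrite -(iter_findex (connect_root _ s)); apply: unitv_sub_iter.
apply/memv_span/map_f.
by rewrite mem_enum inE (closed_froot P_f) // (roots_root (fconnect_sym f_inj)).
Qed.

Lemma sum_indicator (Q : pred T) s : \sum_(u | Q u) (u == s)%:R = (Q s)%:R :> K.
Proof.
rewrite big_mkcond (bigD1 s) //= big1 => [|u /negbTE ->]; last by rewrite if_same.
by rewrite eqxx addr0; case: (Q s).
Qed.

Definition class_sum (r : T) (w : {ffun T -> K^o}) : K := \sum_(s | froot f s == r) w s.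

Lemma class_sum_diffs r w : w \in <<D>>%VS -> class_sum r w = 0.
Proof.
move=> /(coord_span (X := in_tuple D)) ->; rewrite /class_sum.
under eq_bigr do rewrite sum_ffunE.
rewrite exchange_big big1 // => i _.
have /mapP [s _ ->] : (in_tuple D)`_i \in D by apply: mem_nth.
under eq_bigr do rewrite ffunE !ffunE.
by rewrite -mulr_sumr sumrB !sum_indicator (froot_f f_inj) subrr mulr0.
Qed.

Lemma span_reps_notin w u : w \in <<R>>%VS -> u \notin froot_reps -> w u = 0.
Proof.
move=> /(coord_span (X := in_tuple R)) -> u_out; rewrite sum_ffunE big1 // => i _.
have /mapP [r r_rep ->] : (in_tuple R)`_i \in R by apply: mem_nth.
rewrite !ffunE; case: eqP => [ur | _]; last by rewrite scaler0.
by rewrite mem_enum -ur in r_rep; rewrite r_rep in u_out.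
Qed.

Lemma cap_span_diffs_reps : (<<D>> :&: <<R>> = 0)%VS.
Proof.
apply/eqP; rewrite -subv0; apply/subvP => w /[!memv_cap] /andP [wD wR].
rewrite memv0; apply/eqP/ffunP => u; rewrite ffunE.
have [u_rep | ] := boolP (u \in froot_reps); last exact: span_reps_notin.
have /andP [_ /eqP uu] : P u && froots f u by rewrite inE in u_rep.
have := class_sum_diffs u wD; rewrite /class_sum (bigD1 u) ?uu //= big1 ?addr0 //.
move=> s /andP [/eqP su s_ne_u].
apply: span_reps_notin wR _; rewrite inE; apply: contra s_ne_u => /andP [_ /eqP ss].
by rewrite -su ss.
Qed.

Lemma free_reps : free R.
Proof.
apply/freeP => k sum0 i; set x0 := enum_val i; set e := enum froot_reps.
have lt_e (j : 'I_#|froot_reps|) : (j < size e)%N by rewrite -cardE.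
have := congr1 (fun w : {ffun T -> K^o} => w (nth x0 e i)) sum0.
rewrite sum_ffunE ffunE (bigD1 i) //= big1 ?addr0 => [|j ji].
  by rewrite ffunE (nth_map x0) // ffunE eqxx -[_ *: _]/(k i * 1) mulr1.
rewrite ffunE (nth_map x0) // ffunE nth_uniq ?enum_uniq //.
by rewrite val_eqE eq_sym (negbTE ji) scaler0.
Qed.

Lemma dim_span_unitv :
  \dim <<[seq unitv s | s <- enum T & P s]>> = (\dim <<D>> + #|froot_reps|)%N.
Proof.
rewrite span_unitv_decomp dimv_disjoint_sum ?cap_span_diffs_reps //.
by rewrite (eqnP free_reps) size_map cardE.
Qed.

End OrbitQuotient.

Lemma dimH_card_reps n : dimH n.+1 = #|froot_reps (@rotJ n) (@mcycle n.+1)|.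
Proof.
have dimE : \dim (cycle_span n.+1) =
    (\dim <<rot_diffs n>> + #|froot_reps (@rotJ n) (@mcycle n.+1)|)%N.
  exact: (dim_span_unitv algC (@rotJ_inj n) (@mcycle_rotJ n)).
by rewrite /= vass_spanE dimE addKn.
Qed.

Section RotationCommutant.
Variable n : nat.
Local Notation m := n.+1.
Local Notation rho := (ordS_perm n).

Definition rot_commuting : {set 'S_m} :=
  [set s | [exists k : 'I_(m./2), s \in 'C[rho ^+ k.+1]]].

Lemma order_rotJ_lt s : fingraph.order (@rotJ n) s < m -> s \in rot_commuting.
Proof.
set k := fingraph.order _ s => k_lt_m; have k_gt0 : 0 < k := fingraph.order_gt0 _ _.
have Cs_k : rho ^+ k \in 'C[s].
  rewrite -groupV cent1C; apply/cent1P/commgP/conjg_fixP.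
  by rewrite -expVgn -iter_rotJ iter_order //; exact: rotJ_inj.
have Cs_mk : rho ^+ (m - k) \in 'C[s].
  suff -> : rho ^+ (m - k) = (rho ^+ k)^-1 by rewrite groupV.
  by apply/eqP; rewrite eq_sym eq_invg_mul -expgD subnKC ?ordS_permXm // ltnW.
have mE := odd_double_half m; rewrite inE; apply/existsP.
have [le_k | lt_k] := leqP k m./2.
  have lt_k1 : k.-1 < m./2 by rewrite prednK.
  by exists (Ordinal lt_k1); rewrite /= prednK // cent1C.
have lt_mk1 : (m - k).-1 < m./2 by rewrite prednK ?subn_gt0 //; case: (odd m) mE => /=; lia.
by exists (Ordinal lt_mk1); rewrite /= prednK ?subn_gt0 // cent1C.
Qed.

Lemma card_rot_commuting : #|rot_commuting| <= (m./2).+1 * m ^ m./2.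
Proof.
have le_half : m./2 <= m by rewrite -{2}(odd_double_half m) -addnn addnA leq_addl.
pose code (s : 'S_m) := ([pick k : 'I_(m./2) | s \in 'C[rho ^+ k.+1]],
                         [ffun i : 'I_(m./2) => s (widen_ord le_half i)]).
have code_inj : {in rot_commuting &, injective code}.
  move=> s t /[!inE] /existsP [k0 Cs0] /existsP [k0' Ct0] [].
  case: pickP => [k Cs | /(_ k0)]; last by rewrite Cs0.
  case: pickP => [k' Ct [kk'] | /(_ k0')]; last by rewrite Ct0.
  rewrite -{}kk' in Ct => /ffunP eq_st; apply: (cent1_ordS_permX_inj (k := k.+1)) => // i.
  rewrite inE ltnS => le_ik; have lt_i : i < m./2 by apply: leq_ltn_trans le_ik _.
  by have := eq_st (Ordinal lt_i); rewrite !ffunE (_ : widen_ord _ _ = i) //; apply: val_inj.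
rewrite -(card_in_imset code_inj); apply: leq_trans (max_card _) _.
by rewrite card_prod card_option card_ffun !card_ord.
Qed.

End RotationCommutant.

Local Close Scope group_scope.

Lemma expn_mul_fact_le p q : p ^ q * p`! <= (p + q)`!.
Proof.
elim: q => [|q IH]; first by rewrite mul1n addn0.
by rewrite expnS -mulnA addnS factS leq_mul // -addnS leq_addr.
Qed.

Lemma expn3_le_exp8 p : p ^ 3 <= 8 ^ p.
Proof. by rewrite (_ : 8 = 2 ^ 3) // -expnM mulnC expnM leq_exp2r // ltnW // ltn_expl. Qed.

Lemma expn_mul_le_fact C c : exists P, forall p, P <= p -> C * c ^ p <= p`!.
Proof.
exists (c.*2 + C * c ^ c.*2) => p le_Pp.
have [q pE] : exists q, p = c.*2 + q.
  by exists (p - c.*2); rewrite subnKC // (leq_trans (leq_addr _ _) le_Pp).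
rewrite pE leq_add2l in le_Pp *.
apply: leq_trans (expn_mul_fact_le c.*2 q); apply: leq_trans (leq_pmulr _ (fact_gt0 _)).
rewrite expnD mulnA -muln2 expnMn mulnC leq_mul2l; apply/orP; right.
by rewrite muln2; apply: leq_trans le_Pp (ltnW (ltn_expl _ (isT : 1 < 2))).
Qed.

Lemma rot_commuting_negligible K :
  exists N, forall n, N <= n -> K * (n.+1 * #|rot_commuting n|) <= n`!.
Proof.
(* With p = m/2: m * #|rot_commuting| <= (3p)^(p+2) and (m-1)! >= p! * p^(p-1),
   so it suffices that 9K * 3^p * 8^p <= p!. *)
have [P HP] := expn_mul_le_fact (9 * K) 24.
exists P.*2.+1 => n le_Nn; set m := n.+1; set p := m./2.
have mE : odd m + p.*2 = m := odd_double_half m.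
have le_Pp : P <= p by case: (odd m) mE; rewrite -!addnn /=; lia.
have p_gt0 : 0 < p by case: (odd m) mE; rewrite -!addnn /=; lia.
apply: leq_trans (_ : K * (3 * p) ^ (p + 2) <= _).
  rewrite leq_mul2l; apply/orP; right; apply: leq_trans (_ : m ^ (p + 2) <= _); last first.
    by rewrite leq_exp2r ?addn_gt0 ?orbT //; case: (odd m) mE; rewrite -!addnn /=; lia.
  rewrite addn2 !expnS leq_mul2l; apply/orP; right.
  apply: leq_trans (card_rot_commuting n) _; rewrite leq_mul2r; apply/orP; right.
  by case: (odd m) mE; rewrite -!addnn /=; lia.
have -> : (3 * p) ^ (p + 2) = 3 ^ (p + 2) * p ^ 3 * p ^ p.-1.
  by rewrite expnMn -mulnA -expnD; congr (_ * p ^ _); lia.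
rewrite mulnA; apply: leq_trans (_ : p`! * p ^ p.-1 <= _).
  rewrite leq_mul2r; apply/orP; right; apply: leq_trans (HP p le_Pp).
  have -> : 9 * K * 24 ^ p = K * (3 ^ (p + 2) * 8 ^ p).
    by rewrite (_ : 24 = 3 * 8) // expnMn expnD; ring.
  by rewrite !leq_mul2l expn3_le_exp8 !orbT.
rewrite mulnC; apply: leq_trans (expn_mul_fact_le p p.-1) (leq_fact _).
by case: (odd m) mE; rewrite -!addnn /=; lia.
Qed.

Lemma dimH_bounds n : n`! <= n.+1 * dimH n.+1 <= n`! + n.+1 * #|rot_commuting n|.
Proof.
rewrite dimH_card_reps -(card_mcycles n); apply/andP; split.
  exact: (@card_le_mul_reps _ _ (@mcycle n.+1) (@rotJ_inj n) (@mcycle_rotJ n) _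
            (ltn0Sn n) (@rotJ_period n)).
apply: leq_trans (mul_reps_le (@rotJ_inj n) (@mcycle_rotJ n) _) _.
rewrite leq_add2l leq_mul2l subset_leq_card ?orbT //.
apply/subsetP => s; rewrite inE => /andP [_ /order_rotJ_lt]; exact.
Qed.

Local Open Scope ring_scope.

Lemma natr_ratio_near1 (R : realFieldType) (c d K : nat) (eps : R) :
  (0 < c)%N -> (K * d <= c)%N -> 1 < eps * K%:R -> `|(c + d)%:R / c%:R - 1| < eps.
Proof.
move=> c_gt0 Kdc epsK; have c_gt0R : 0 < c%:R :> R by rewrite ltr0n.
rewrite natrD mulrDl divff ?gt_eqF // addrC addKr ger0_norm ?divr_ge0 //.
rewrite ltr_pdivrMr //; move: Kdc; rewrite -(ler_nat R) natrM => KdcR.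
have K_ge0 : 0 <= K%:R :> R := ler0n _ _.
have eps_gt0 : 0 < eps by apply: contraTT epsK; rewrite -!leNgt => eps_le0; nra.
have [-> | d_gt0] := posnP d; first by rewrite mulr_gt0.
have d_gt0R : 0 < d%:R :> R by rewrite ltr0n.
nra.
Qed.

Local Close Scope ring_scope.

Theorem theorem17 :
  (forall m : nat, (1 <= m)%N -> ((m.-1)`! <= m * dimH m)%N) /\
  (forall eps : rat, (0 < eps)%R ->
     exists N : nat, forall m : nat, (N <= m)%N -> (1 <= m)%N ->
       (`| (dimH m)%:R * m%:R / (m.-1)`!%:R - 1 | < eps)%R).
Proof.
split=> [[|n] // _ | eps eps_gt0]; first by case/andP: (dimH_bounds n).
have [K epsK] : exists K : nat, (1 < eps * K%:R)%R.
  exists (Num.bound eps^-1); rewrite -[X in (X < _)%R](mulfV (lt0r_neq0 eps_gt0)) ltr_pM2l //.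
  by rewrite archi_boundP // invr_ge0 ltW.
have [N negl] := rot_commuting_negligible K.
exists N.+1 => -[|n] // le_Nn _; have /andP [lb ub] := dimH_bounds n.
rewrite -natrM mulnC -(subnKC lb); apply: natr_ratio_near1 (fact_gt0 n) _ epsK.
by apply: leq_trans (negl n le_Nn); rewrite leq_mul2l leq_subLR ub orbT.
Qed.
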